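(* $E^{\partial}_{FTP}$ is sound and complete for bisimilarity on $T(\Sigma^{\partial}_{FTP})$: for all closed $s,t\in T(\Sigma^{\partial}_{FTP})$, $E^{\partial}_{FTP}\vdash s=t$ if and only if $s\sim t$.
   Context: Fix a finite nonempty set $\mathcal A$ of actions, a finite set $\mathcal P$ of predicates, a subset $\mathcal P^I\subseteq\mathcal P$ of implicit predicates, and for each $P\in\mathcal P^I$ a set $\mathcal A_P\subseteq\mathcal A$. $\Sigma^\partial_{FTP}$ consists of $\delta$, constants $\kappa_P$ ($P\in\mathcal P$), prefixes $a.\_$ ($a\in\mathcal A$), binary $+$, and unary $\partial_{\mathcal B,\mathcal Q}$ for all $\mathcal B\subseteq\mathcal A$, $\mathcal Q\subseteq\mathcal P$. Semantics on closed terms: the least relations closed under: $a.x\xrightarrow{a}x$; $x\xrightarrow{a}x'\Rightarrow x+y\xrightarrow{a}x'$; $y\xrightarrow{a}y'\Rightarrow x+y\xrightarrow{a}y'$; $P\kappa_P$; $Px\Rightarrow P(x+y)$; $Py\Rightarrow P(x+y)$; $Px\Rightarrow P(a.x)$ for $P\in\mathcal P^I$, $a\in\mathcal A_P$; $x\xrightarrow{a}x'\Rightarrow\partial_{\mathcal B,\mathcal Q}(x)\xrightarrow{a}\partial_{\emptyset,\mathcal Q\cap\mathcal P^I}(x')$ if $a\notin\mathcal B$; $Px\Rightarrow P(\partial_{\mathcal B,\mathcal Q}(x))$ if $P\notin\mathcal Q$. Bisimulation: symmetric $R$ with $(s,t)\in R$, $s\xrightarrow{a}s'$ implying $t\xrightarrow{a}t'$,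 $(s',t')\in R$, and $Ps$ implying $Pt$; $\sim$ is the union of all bisimulations. $E^\partial_{FTP}$ consists of: $x+y=y+x$; $(x+y)+z=x+(y+z)$; $x+x=x$; $x+\delta=x$; $a.(x+\kappa_P)=a.(x+\kappa_P)+\kappa_P$ ($P\in\mathcal P^I$, $a\in\mathcal A_P$); $\partial_{\mathcal B,\mathcal Q}(\delta)=\delta$; $\partial_{\mathcal B,\mathcal Q}(\kappa_P)=\delta$ if $P\in\mathcal Q$; $\partial_{\mathcal B,\mathcal Q}(\kappa_P)=\kappa_P$ if $P\notin\mathcal Q$; $\partial_{\mathcal B,\mathcal Q}(a.x)=\sum_{P\notin\mathcal Q,\,P(a.x)}\kappa_P$ if $a\in\mathcal B$ (schema: for each closed instance of $x$ the sum ranges over predicates $P\notin\mathcal Q$ satisfied by $a.x$); $\partial_{\mathcal B,\mathcal Q}(a.x)=\partial_{\emptyset,\mathcal Q}(a.x)$ if $a\notin\mathcal B$; $\partial_{\emptyset,\mathcal Q}(a.x)=a.\partial_{\emptyset,\mathcal Q\cap\mathcal P^I}(x)$; $\partial_{\mathcal B,\mathcal Q}(x+y)=\partial_{\mathcal B,\mathcal Q}(x)+\partial_{\mathcal B,\mathcal Q}(y)$. $\vdash$ is derivability in equational logic. *)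

From mathcomp Require Import all_boot.
Set Implicit Arguments. Unset Strict Implicit. Unset Printing Implicit Defensive.

Section FTP.
Variables (A P : finType).

Inductive term : Type :=
| Var   of nat
| Delta
| Kappa of P
| Pref  of A & term
| Plus  of term & term
| Encap of {set A} & {set P} & term.

Fixpoint closed_term (t : term) : Prop :=
  match t with
  | Var _ => False
  | Delta | Kappa _ => True
  | Pref _ t => closed_term t
  | Plus t u => closed_term t /\ closed_term u
  | Encap _ _ t => closed_term t
  end.

Fixpoint subst (s : nat -> term) (t : term) : term :=
  match t with
  | Var n => s n
  | Delta => Delta
  | Kappa p => Kappa p
  | Pref a t => Pref a (subst s t)
  | Plus t u => Plus (subst s t) (subst s u)
  | Encap B Q t => Encap B Q (subst s t)
  end.

Variables (PI : {set P}) (AP : P -> {set A}).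

Inductive step : term -> A -> term -> Prop :=
| st_pref a x : step (Pref a x) a x
| st_plusl a x y x' : step x a x' -> step (Plus x y) a x'
| st_plusr a x y y' : step y a y' -> step (Plus x y) a y'
| st_encap (B : {set A}) (Q : {set P}) a x x' : a \notin B -> step x a x' ->
    step (Encap B Q x) a (Encap set0 (Q :&: PI) x').

(* Predicate satisfaction: holds p x means "P x" *)
Inductive holds : P -> term -> Prop :=
| h_kappa p : holds p (Kappa p)
| h_plusl p x y : holds p x -> holds p (Plus x y)
| h_plusr p x y : holds p y -> holds p (Plus x y)
| h_pref p a x : p \in PI -> a \in AP p -> holds p x -> holds p (Pref a x)
| h_encap p (B : {set A}) (Q : {set P}) x : p \notin Q -> holds p x -> holds p (Encap B Q x).

Definition bisimulation (R : term -> term -> Prop) : Prop :=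
  (forall s t, R s t -> R t s) /\
  (forall s t, R s t ->
     (forall a s', step s a s' -> exists2 t', step t a t' & R s' t') /\
     (forall p, holds p s -> holds p t)).

Definition bisimilar (s t : term) : Prop :=
  exists R, bisimulation R /\ R s t.

Definition sumK (l : seq P) : term := foldr (fun p u => Plus (Kappa p) u) Delta l.

Inductive ax : term -> term -> Prop :=
| ax_comm : ax (Plus (Var 0) (Var 1)) (Plus (Var 1) (Var 0))
| ax_assoc : ax (Plus (Plus (Var 0) (Var 1)) (Var 2))
                (Plus (Var 0) (Plus (Var 1) (Var 2)))
| ax_idem : ax (Plus (Var 0) (Var 0)) (Var 0)
| ax_delta : ax (Plus (Var 0) Delta) (Var 0)
| ax_impl p a : p \in PI -> a \in AP p ->
    ax (Pref a (Plus (Var 0) (Kappa p)))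
       (Plus (Pref a (Plus (Var 0) (Kappa p))) (Kappa p))
| ax_encap_delta (B : {set A}) (Q : {set P}) : ax (Encap B Q Delta) Delta
| ax_encap_kappa_in (B : {set A}) (Q : {set P}) p : p \in Q -> ax (Encap B Q (Kappa p)) Delta
| ax_encap_kappa_out (B : {set A}) (Q : {set P}) p : p \notin Q -> ax (Encap B Q (Kappa p)) (Kappa p)
| ax_encap_pref_block (B : {set A}) (Q : {set P}) a t (l : seq P) : a \in B -> closed_term t ->
    (forall p, p \in l <-> (p \notin Q /\ holds p (Pref a t))) ->
    ax (Encap B Q (Pref a t)) (sumK l)
| ax_encap_pref_free (B : {set A}) (Q : {set P}) a : a \notin B ->
    ax (Encap B Q (Pref a (Var 0))) (Encap set0 Q (Pref a (Var 0)))
| ax_encap_pref (Q : {set P}) a :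
    ax (Encap set0 Q (Pref a (Var 0))) (Pref a (Encap set0 (Q :&: PI) (Var 0)))
| ax_encap_plus (B : {set A}) (Q : {set P}) :
    ax (Encap B Q (Plus (Var 0) (Var 1))) (Plus (Encap B Q (Var 0)) (Encap B Q (Var 1))).

Inductive deriv : term -> term -> Prop :=
| d_ax l r (s : nat -> term) : ax l r -> deriv (subst s l) (subst s r)
| d_refl t : deriv t t
| d_sym t u : deriv t u -> deriv u t
| d_trans t u v : deriv t u -> deriv u v -> deriv t v
| d_pref a t u : deriv t u -> deriv (Pref a t) (Pref a u)
| d_plus t t' u u' : deriv t t' -> deriv u u' -> deriv (Plus t u) (Plus t' u')
| d_encap (B : {set A}) (Q : {set P}) t u : deriv t u -> deriv (Encap B Q t) (Encap B Q u).

End FTP.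

(* Soundness: bisimilarity is a congruence containing every closed instance of
   the axioms.  Completeness: derivably, every transition [t -a-> t'] and every
   predicate [P t] can be absorbed, [t = t + a.t'] and [t = t + kappa_P], and
   every closed term is derivably a finite sum of such prefixes and constants
   (encapsulation is pushed inside by the axioms).  Hence if [s ~ t], an
   induction on the sizes of [s] and [t] absorbs each summand of [s] into [t],
   giving [t = t + s]; symmetrically [s = s + t], so [s = t]. *)
From Pilot Require Import Defs.
From mathcomp Require Import all_boot.
From mathcomp Require Import zify.
From Stdlib Require List.
Set Implicit Arguments. Unset Strict Implicit. Unset Printing Implicit Defensive.

Section FTP.
Variables (A P : finType) (PI : {set P}) (AP : P -> {set A}).
Notation term := (term A P).
Notation step := (@Defs.step A P PI).
Notation holds := (@Defs.holds A P PI AP).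
Notation bis := (@bisimilar A P PI AP).
Notation D := (@deriv A P PI AP).

Lemma step_Delta a x : ~ step (Delta A P) a x.
Proof. by move=> h; inversion h. Qed.

Lemma step_Kappa p a x : ~ step (Kappa A p) a x.
Proof. by move=> h; inversion h. Qed.

Lemma step_Pref b x a y : step (Pref b x) a y <-> a = b /\ y = x.
Proof. by split=> [h|[-> ->]]; [inversion h|exact: st_pref]. Qed.

Lemma step_Plus x y a z : step (Plus x y) a z <-> step x a z \/ step y a z.
Proof.
by split=> [h|[h|h]]; [inversion h; subst; auto|exact: st_plusl|exact: st_plusr].
Qed.

Lemma step_Encap B Q x a z : step (Encap B Q x) a z <->
  exists2 x', a \notin B /\ step x a x' & z = Encap set0 (Q :&: PI) x'.
Proof.
split=> [h|[x' [? ?] ->]]; last exact: st_encap.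
by inversion h; subst; exists x'.
Qed.

Lemma holds_Delta p : ~ holds p (Delta A P).
Proof. by move=> h; inversion h. Qed.

Lemma holds_Var p n : ~ holds p (Var A P n).
Proof. by move=> h; inversion h. Qed.

Lemma holds_Kappa p q : holds p (Kappa A q) <-> p = q.
Proof. by split=> [h|->]; [inversion h|exact: h_kappa]. Qed.

Lemma holds_Pref p a x :
  holds p (Pref a x) <-> [/\ p \in PI, a \in AP p & holds p x].
Proof. by split=> [h|[*]]; [inversion h|exact: h_pref]. Qed.

Lemma holds_Plus p x y : holds p (Plus x y) <-> holds p x \/ holds p y.
Proof.
by split=> [h|[h|h]]; [inversion h; subst; auto|exact: h_plusl|exact: h_plusr].
Qed.

Lemma holds_Encap p B Q x : holds p (Encap B Q x) <-> p \notin Q /\ holds p x.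
Proof. by split=> [h|[*]]; [inversion h|exact: h_encap]. Qed.

(* Lets the sum in [ax_encap_pref_block] be computed by filtering [enum P]. *)
Fixpoint holdsb (p : P) (t : term) : bool :=
  match t with
  | Var _ | Delta => false
  | Kappa q => p == q
  | Pref a x => [&& p \in PI, a \in AP p & holdsb p x]
  | Plus x y => holdsb p x || holdsb p y
  | Encap _ Q x => (p \notin Q) && holdsb p x
  end.

Lemma holdsP p t : reflect (holds p t) (holdsb p t).
Proof.
apply: (iffP idP); elim: t => /=.
- by [].
- by [].
- by move=> q /eqP ->; apply/holds_Kappa.
- by move=> a x IH /and3P[? ? /IH ?]; apply/holds_Pref.
- by move=> x IHx y IHy /orP[/IHx|/IHy] ?; apply/holds_Plus; auto.
- by move=> B Q x IH /andP[? /IH ?]; apply/holds_Encap.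
- by move=> n /holds_Var.
- by move=> /holds_Delta.
- by move=> q /holds_Kappa ->.
- by move=> a x IH /holds_Pref[-> -> /IH].
- by move=> x IHx y IHy /holds_Plus[/IHx ->|/IHy ->]; rewrite ?orbT.
- by move=> B Q x IH /holds_Encap[-> /IH].
Qed.

Lemma step_closed x a x' : step x a x' -> closed_term x -> closed_term x'.
Proof. by elim=> //= *; intuition. Qed.

Lemma subst_closed (s : nat -> term) t : closed_term t -> subst s t = t.
Proof.
by elim: t => //= [a t IH|t IHt u IHu [? ?]|B Q t IH] *; rewrite ?IH ?IHt ?IHu.
Qed.

Lemma closed_sumK (l : seq P) : closed_term (sumK A l).
Proof. by elim: l. Qed.

Lemma step_sumK (l : seq P) a x : ~ step (sumK A l) a x.
Proof.
by elim: l => [|p l IH] /=; [exact: step_Delta|case/step_Plus=> [/step_Kappa|/IH]].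
Qed.

Lemma holds_sumK (l : seq P) p : holds p (sumK A l) <-> p \in l.
Proof.
elim: l => [|q l IH] /=; first by split=> // /holds_Delta.
rewrite holds_Plus holds_Kappa in_cons IH.
by split=> [[->|->]|/orP[/eqP|]]; rewrite ?eqxx ?orbT; auto.
Qed.

(** * Soundness *)

Lemma bisimilar_bisimulation : bisimulation PI AP bis.
Proof.
split=> [s t [R [[Rsym Rsim] Rst]]|s t [R [[Rsym Rsim] Rst]]].
  by exists R; split=> //; apply: Rsym.
have [Rstep Rholds] := Rsim _ _ Rst; split=> [a s' /Rstep[t' ? ?]|p /Rholds //].
by exists t' => //; exists R.
Qed.

Lemma bis_sym s t : bis s t -> bis t s.
Proof. exact: bisimilar_bisimulation.1. Qed.

Lemma bis_step s t a s' :
  bis s t -> step s a s' -> exists2 t', step t a t' & bis s' t'.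
Proof. by move=> st; case: (bisimilar_bisimulation.2 _ _ st) => + _; apply. Qed.

Lemma bis_holds s t p : bis s t -> holds p s -> holds p t.
Proof. by move=> st; case: (bisimilar_bisimulation.2 _ _ st) => _; apply. Qed.

Lemma bis_trans s u t : bis s u -> bis u t -> bis s t.
Proof.
move=> su ut; exists (fun x y => exists2 z, bis x z & bis z y).
split; last by exists u.
split=> [x y [z ? ?]|x y [z xz zy]]; first by exists z; exact: bis_sym.
split=> [a x' /(bis_step xz)[z' /(bis_step zy)[y' ? ?] ?]|p /(bis_holds xz)].
  by exists y' => //; exists z'.
exact: bis_holds zy.
Qed.

Lemma bis_same u v :
  (forall a u', step u a u' <-> step v a u') ->
  (forall p, holds p u <-> holds p v) -> bis u v.
Proof.
move=> same_step same_holds.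
exists (fun x y => x = y \/ (x = u /\ y = v) \/ (x = v /\ y = u)).
split; last by right; left.
split=> [x y [->|[[-> ->]|[-> ->]]]|x y [->|[[-> ->]|[-> ->]]]]; auto.
- by split=> [a x' ?|//]; exists x'; auto.
- split=> [a x' ?|p]; last exact: (same_holds p).1.
  by exists x'; [exact/same_step|left].
- split=> [a x' ?|p]; last exact: (same_holds p).2.
  by exists x'; [exact/same_step|left].
Qed.

Inductive ctx_closure : term -> term -> Prop :=
| cc_bis x y : bis x y -> ctx_closure x y
| cc_pref a x y : ctx_closure x y -> ctx_closure (Pref a x) (Pref a y)
| cc_plus x x' y y' :
    ctx_closure x x' -> ctx_closure y y' -> ctx_closure (Plus x y) (Plus x' y')
| cc_encap B Q x y : ctx_closure x y -> ctx_closure (Encap B Q x) (Encap B Q y).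

Lemma ctx_closure_sym x y : ctx_closure x y -> ctx_closure y x.
Proof.
elim=> *; [apply: cc_bis; exact: bis_sym|exact: cc_pref|exact: cc_plus|exact: cc_encap].
Qed.

Lemma ctx_closure_bisimulation : bisimulation PI AP ctx_closure.
Proof.
split=> [|s t]; first exact: ctx_closure_sym.
elim=> {s t}.
- move=> x y xy; split=> [a x' /(bis_step xy)[y' ? ?]|p /(bis_holds xy) //].
  by exists y' => //; exact: cc_bis.
- move=> a x y xy [_ IHholds]; split.
    by move=> b z /step_Pref[-> ->]; exists y => //; exact: st_pref.
  by move=> p /holds_Pref[? ? ?]; apply/holds_Pref; split; auto.
- move=> x x' y y' _ [IHx IHxh] _ [IHy IHyh]; split.
    move=> b z /step_Plus[/IHx[w ? ?]|/IHy[w ? ?]]; exists w => //.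
      exact: st_plusl.
    exact: st_plusr.
  by move=> p /holds_Plus[?|?]; apply/holds_Plus; auto.
- move=> B Q x y _ [IHstep IHholds]; split.
    move=> b z /step_Encap[x' [? /IHstep[w ? ?]] ->].
    by exists (Encap set0 (Q :&: PI) w); [exact: st_encap|exact: cc_encap].
  by move=> p /holds_Encap[? ?]; apply/holds_Encap; split; auto.
Qed.

Lemma ctx_closure_bis x y : ctx_closure x y -> bis x y.
Proof. by move=> xy; exists ctx_closure; split=> //; exact: ctx_closure_bisimulation. Qed.

Lemma ax_sound l r (s : nat -> term) : ax PI AP l r -> bis (subst s l) (subst s r).
Proof.
case=> /= [||||p a pPI aAP|B Q|B Q p pQ|B Q p pQ|B Q a t l' aB ct hl'|B Q a aB|Q a|B Q].
- by apply: bis_same=> [b u|q]; rewrite !(step_Plus, holds_Plus); tauto.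
- by apply: bis_same=> [b u|q]; rewrite !(step_Plus, holds_Plus); tauto.
- by apply: bis_same=> [b u|q]; rewrite !(step_Plus, holds_Plus); tauto.
- apply: bis_same=> [b u|q]; rewrite (step_Plus, holds_Plus).
    by split=> [[|/step_Delta]|]; auto.
  by split=> [[|/holds_Delta]|]; auto.
- apply: bis_same=> [b u|q]; rewrite (step_Plus, holds_Plus).
    by split=> [|[|/step_Kappa]]; auto.
  rewrite holds_Kappa; split=> [|[//|->]]; first by left.
  by apply/holds_Pref; split=> //; apply/holds_Plus; right; exact/holds_Kappa.
- apply: bis_same=> [b u|q]; rewrite (step_Encap, holds_Encap).
    by split=> [[x' [_ /step_Delta]]|/step_Delta].
  by split=> [[_ /holds_Delta]|/holds_Delta].
- apply: bis_same=> [b u|q]; rewrite (step_Encap, holds_Encap).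
    by split=> [[x' [_ /step_Kappa]]|/step_Delta].
  rewrite holds_Kappa; split=> [[qQ eq]|/holds_Delta //].
  by move: qQ; rewrite eq pQ.
- apply: bis_same=> [b u|q]; rewrite (step_Encap, holds_Encap).
    by split=> [[x' [_ /step_Kappa]]|/step_Kappa].
  by rewrite holds_Kappa; split=> [[]|->].
- rewrite subst_closed // (subst_closed _ (closed_sumK _)).
  apply: bis_same=> [b u|q].
    split=> [/step_Encap[x' [bB /step_Pref[eb _]]]|/step_sumK //].
    by move: bB; rewrite eb aB.
  by rewrite holds_Encap holds_sumK hl'.
- apply: bis_same=> [b u|q]; last by rewrite !holds_Encap.
  rewrite !step_Encap; split=> -[x' [_ st] ->]; exists x' => //.
    by rewrite in_set0.
  by split=> //; case/step_Pref: (st) => ->.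
- apply: bis_same=> [b u|q].
    rewrite step_Encap !step_Pref.
    split=> [[x' [_ /step_Pref[-> ->]] ->]|[-> ->]] //.
    by exists (s 0); [rewrite in_set0 step_Pref|].
  rewrite holds_Encap !holds_Pref; split.
    case=> qQ [qPI ? ?]; split=> //; apply/holds_Encap.
    by rewrite in_setI qPI andbT.
  case=> qPI ? /holds_Encap[].
  by rewrite in_setI qPI andbT.
- apply: bis_same=> [b u|q]; last by rewrite holds_Encap !holds_Plus !holds_Encap; tauto.
  rewrite step_Plus !step_Encap; split.
    by case=> x' [? /step_Plus[?|?]] ->; [left|right]; exists x'.
  by case=> -[x' [? ?] ->]; exists x' => //; split=> //; apply/step_Plus; auto.
Qed.

Lemma soundness s t : D s t -> bis s t.
Proof.
elim=> {s t}.
- by move=> l r s; exact: ax_sound.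
- by move=> t; apply: bis_same.
- by move=> t u _; exact: bis_sym.
- by move=> t u v _ tu _; exact: bis_trans.
- by move=> a t u _ tu; apply/ctx_closure_bis/cc_pref/cc_bis.
- by move=> t t' u u' _ tt' _ uu'; apply/ctx_closure_bis/cc_plus; exact: cc_bis.
- by move=> B Q t u _ tu; apply/ctx_closure_bis/cc_encap/cc_bis.
Qed.

(** * Completeness *)

Definition subst3 (x y z : term) : nat -> term :=
  fun n => match n with 0 => x | 1 => y | _ => z end.

Lemma deriv_plusC x y : D (Plus x y) (Plus y x).
Proof. exact: d_ax (subst3 x y x) (ax_comm PI AP). Qed.

Lemma deriv_plusA x y z : D (Plus (Plus x y) z) (Plus x (Plus y z)).
Proof. exact: d_ax (subst3 x y z) (ax_assoc PI AP). Qed.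

Lemma deriv_plus_idem x : D (Plus x x) x.
Proof. exact: d_ax (subst3 x x x) (ax_idem PI AP). Qed.

Lemma deriv_plus_Delta x : D (Plus x (Delta A P)) x.
Proof. exact: d_ax (subst3 x x x) (ax_delta PI AP). Qed.

Lemma deriv_Encap_Plus (B : {set A}) (Q : {set P}) x y :
  D (Encap B Q (Plus x y)) (Plus (Encap B Q x) (Encap B Q y)).
Proof. exact: d_ax (subst3 x y x) (ax_encap_plus PI AP B Q). Qed.

Lemma deriv_Encap_Pref (B : {set A}) (Q : {set P}) a x : a \notin B ->
  D (Encap B Q (Pref a x)) (Pref a (Encap set0 (Q :&: PI) x)).
Proof.
move=> aB; apply: d_trans (d_ax (subst3 x x x) (ax_encap_pref_free PI AP Q aB)) _.
exact: d_ax (subst3 x x x) (ax_encap_pref PI AP Q a).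
Qed.

Definition absorbs (t u : term) := D t (Plus t u).

Lemma absorbs_Plusl x y u : absorbs x u -> absorbs (Plus x y) u.
Proof.
move=> xu; apply: d_trans (d_plus xu (d_refl PI AP y)) _.
apply: d_trans (deriv_plusA _ _ _) _.
apply: d_trans (d_plus (d_refl PI AP x) (deriv_plusC _ _)) _.
exact: d_sym (deriv_plusA _ _ _).
Qed.

Lemma absorbs_Plusr x y u : absorbs y u -> absorbs (Plus x y) u.
Proof.
move=> yu; apply: d_trans (d_plus (d_refl PI AP x) yu) _.
exact: d_sym (deriv_plusA _ _ _).
Qed.

Lemma step_absorbs t a t' : step t a t' -> absorbs t (Pref a t').
Proof.
elim=> {t a t'} [a x|a x y x' _|a x y y' _|B Q a x x' aB _ IH].
- exact: d_sym (deriv_plus_idem _).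
- exact: absorbs_Plusl.
- exact: absorbs_Plusr.
- apply: d_trans (d_encap B Q IH) _.
  apply: d_trans (deriv_Encap_Plus _ _ _ _) _.
  exact: d_plus (d_refl PI AP _) (deriv_Encap_Pref Q x' aB).
Qed.

Lemma holds_absorbs p t : holds p t -> absorbs t (Kappa A p).
Proof.
elim=> {p t} [p|p x y _|p x y _|p a x pPI aAP _ IH|p B Q x pQ _ IH].
- exact: d_sym (deriv_plus_idem _).
- exact: absorbs_Plusl.
- exact: absorbs_Plusr.
- apply: d_trans (d_pref a IH) _.
  apply: d_trans (d_ax (subst3 x x x) (ax_impl pPI aAP)) _.
  exact: d_plus (d_pref a (d_sym IH)) (d_refl PI AP _).
- apply: d_trans (d_encap B Q IH) _.
  apply: d_trans (deriv_Encap_Plus _ _ _ _) _.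
  exact: d_plus (d_refl PI AP _) (d_ax (subst3 x x x) (ax_encap_kappa_out PI AP B pQ)).
Qed.

Definition sum_terms (L : seq term) : term := foldr (@Plus A P) (Delta A P) L.

Lemma sumK_sum_terms (l : seq P) : sumK A l = sum_terms (map (@Kappa A P) l).
Proof. by elim: l => //= p l ->. Qed.

Lemma deriv_sum_terms_cat L1 L2 :
  D (sum_terms (L1 ++ L2)) (Plus (sum_terms L1) (sum_terms L2)).
Proof.
elim: L1 => [|u L1 IH] /=.
  exact: d_sym (d_trans (deriv_plusC _ _) (deriv_plus_Delta _)).
apply: d_trans (d_plus (d_refl PI AP u) IH) _.
exact: d_sym (deriv_plusA _ _ _).
Qed.

Lemma absorbs_sum_terms t L :
  (forall u, List.In u L -> absorbs t u) -> absorbs t (sum_terms L).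
Proof.
elim: L => [|u L IH] /= tL; first exact: d_sym (deriv_plus_Delta _).
apply: d_trans (IH (fun v vL => tL v (or_intror vL))) _.
apply: d_trans (d_plus (tL u (or_introl erefl)) (d_refl PI AP _)) _.
exact: deriv_plusA.
Qed.

Lemma holds_sum_terms u L p : List.In u L -> holds p u -> holds p (sum_terms L).
Proof. by elim: L => //= v L IH [<-|uL] pu; apply/holds_Plus; auto. Qed.

(* The constants are not required to hold in [x]: soundness recovers this. *)
Definition summand (x u : term) :=
  (exists a x', u = Pref a x' /\ step x a x') \/ (exists p, u = Kappa A p).

Definition head_normal_form (x : term) (L : seq term) :=
  D x (sum_terms L) /\ forall u, List.In u L -> summand x u.

Lemma head_normal_form_cat x L1 L2 :
  D x (Plus (sum_terms L1) (sum_terms L2)) ->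
  (forall u, List.In u L1 -> summand x u) ->
  (forall u, List.In u L2 -> summand x u) -> head_normal_form x (L1 ++ L2).
Proof.
move=> x12 L1x L2x; split; first exact: d_trans x12 (d_sym (deriv_sum_terms_cat _ _)).
by move=> u uL; case: (List.in_app_or _ _ _ uL) => [/L1x|/L2x].
Qed.

Lemma encap_summand (B : {set A}) (Q : {set P}) x u : closed_term x -> summand x u ->
  exists L, D (Encap B Q u) (sum_terms L) /\
    forall v, List.In v L -> summand (Encap B Q x) v.
Proof.
move=> cx [[a [x' [-> xx']]]|[p ->]].
- have cx' := step_closed xx' cx.
  case: (boolP (a \in B)) => aB.
    pose l := [seq p <- enum P | (p \notin Q) && holdsb p (Pref a x')].
    have hl p : p \in l <-> p \notin Q /\ holds p (Pref a x').
      rewrite mem_filter mem_enum andbT.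
      by split=> [/andP[? /holdsP]|[? /holdsP ?]]; last apply/andP.
    exists (map (@Kappa A P) l); split.
      rewrite -sumK_sum_terms.
      have := d_ax (subst3 x x x) (ax_encap_pref_block aB cx' hl).
      by rewrite /= subst_closed // (subst_closed _ (closed_sumK _)).
    by move=> v /List.in_map_iff[p [<- _]]; right; exists p.
  exists [:: Pref a (Encap set0 (Q :&: PI) x')]; split.
    exact: d_trans (deriv_Encap_Pref _ _ aB) (d_sym (deriv_plus_Delta _)).
  move=> v [<-|//]; left; exists a, (Encap set0 (Q :&: PI) x'); split=> //.
  exact: st_encap.
- case: (boolP (p \in Q)) => pQ.
    by exists [::]; split=> //; exact: d_ax (subst3 x x x) (ax_encap_kappa_in PI AP B pQ).
  exists [:: Kappa A p]; split; last by move=> v [<-|//]; right; exists p.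
  apply: d_trans (d_ax (subst3 x x x) (ax_encap_kappa_out PI AP B pQ)) _.
  exact: d_sym (deriv_plus_Delta _).
Qed.

Lemma encap_head_normal_form (B : {set A}) (Q : {set P}) x L : closed_term x ->
  (forall u, List.In u L -> summand x u) ->
  exists L', D (Encap B Q (sum_terms L)) (sum_terms L') /\
    forall v, List.In v L' -> summand (Encap B Q x) v.
Proof.
move=> cx; elim: L => [|u L IH] Lx /=.
  by exists [::]; split=> //; exact: d_ax (subst3 x x x) (ax_encap_delta PI AP B Q).
have [L1 [u_L1 L1x]] := encap_summand B Q cx (Lx u (or_introl erefl)).
have [L2 [L_L2 L2x]] := IH (fun v vL => Lx v (or_intror vL)).
exists (L1 ++ L2); split; last by move=> v vL; case: (List.in_app_or _ _ _ vL) => [/L1x|/L2x].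
apply: d_trans (deriv_Encap_Plus _ _ _ _) _.
exact: d_trans (d_plus u_L1 L_L2) (d_sym (deriv_sum_terms_cat _ _)).
Qed.

Lemma summand_Plusl x y u : summand x u -> summand (Plus x y) u.
Proof.
case=> [[a [x' [-> xx']]]|[p ->]]; last by right; exists p.
by left; exists a, x'; split=> //; exact: st_plusl.
Qed.

Lemma summand_Plusr x y u : summand y u -> summand (Plus x y) u.
Proof.
case=> [[a [y' [-> yy']]]|[p ->]]; last by right; exists p.
by left; exists a, y'; split=> //; exact: st_plusr.
Qed.

Lemma closed_head_normal_form x : closed_term x -> exists L, head_normal_form x L.
Proof.
elim: x => //= [_|p _|a x _ _|x IHx y IHy [cx cy]|B Q x IH cx].
- by exists [::]; split=> //; exact: d_refl.
- exists [:: Kappa A p]; split; first exact: d_sym (deriv_plus_Delta _).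
  by move=> v [<-|//]; right; exists p.
- exists [:: Pref a x]; split; first exact: d_sym (deriv_plus_Delta _).
  by move=> v [<-|//]; left; exists a, x; split=> //; exact: st_pref.
- have [L1 [x_L1 L1x]] := IHx cx; have [L2 [y_L2 L2y]] := IHy cy.
  exists (L1 ++ L2); apply: head_normal_form_cat (d_plus x_L1 y_L2) _ _.
    by move=> u /L1x; exact: summand_Plusl.
  by move=> u /L2y; exact: summand_Plusr.
- have [L [x_L Lx]] := IH cx.
  have [L' [xL_L' L'x]] := encap_head_normal_form B Q cx Lx.
  by exists L'; split=> //; exact: d_trans (d_encap B Q x_L) xL_L'.
Qed.

Lemma absorbs_antisym x y : absorbs x y -> absorbs y x -> D x y.
Proof.
move=> xy yx; apply: d_trans xy _.
exact: d_trans (deriv_plusC _ _) (d_sym yx).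
Qed.

Fixpoint term_size (t : term) : nat :=
  match t with
  | Pref _ x | Encap _ _ x => (term_size x).+1
  | Plus x y => (term_size x + term_size y).+1
  | _ => 1
  end.

Lemma step_term_size x a x' : step x a x' -> term_size x' < term_size x.
Proof. by elim=> //= *; lia. Qed.

Lemma bis_absorbs s t : closed_term s -> closed_term t -> bis s t -> absorbs t s.
Proof.
have [n] := ubnP (term_size s + term_size t).
elim: n s t => // n IH s t st_n cs ct st.
have [L [s_L Ls]] := closed_head_normal_form cs.
apply: d_trans (absorbs_sum_terms (L := L) _) (d_plus (d_refl PI AP t) (d_sym s_L)).
move=> u uL; case: (Ls _ uL) => [[a [s' [eu ss']]]|[p eu]]; subst u.
- have [t' tt' s't'] := bis_step st ss'.
  have lt_s := step_term_size ss'; have lt_t := step_term_size tt'.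
  have cs' := step_closed ss' cs; have ct' := step_closed tt' ct.
  have t's' : D t' s'.
    apply: absorbs_antisym; [apply: IH s't'|apply: IH (bis_sym s't')] => //; lia.
  exact: d_trans (step_absorbs tt') (d_plus (d_refl PI AP t) (d_pref a t's')).
- apply: holds_absorbs; apply: (bis_holds st).
  apply: (bis_holds (bis_sym (soundness s_L))).
  exact: holds_sum_terms uL (h_kappa PI AP p).
Qed.

End FTP.

Theorem corollary1 (A P : finType) (hA : 0 < #|A|) (PI : {set P})
    (AP : P -> {set A}) (s t : term A P) :
  closed_term s -> closed_term t -> (deriv PI AP s t <-> bisimilar PI AP s t).
Proof.
move=> cs ct; split; first exact: soundness.
by move=> st; apply: absorbs_antisym; apply: bis_absorbs => //; exact: bis_sym.
Qed.
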